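(* Let $\mathcal M$ be a local Moufang set with basis $(0,\infty)$ and little projective group $G$, and let $\tau=\mu_e$ for some unit $e$. Then $G=U_0HU_\infty\,\cup\,U_0H\tau U_0^\circ$. Consequently the stabilizer of $0$ in $G$ is $G_0=U_0H$, and the stabilizer of both $0$ and $\infty$ is $G_{0,\infty}=H$.
   Context: Group actions are right actions, written $xg$; conjugation is $g^h=h^{-1}gh$. For a set $X$ with an equivalence relation $\sim$, $\overline{x}$ denotes the class of $x$, $\overline X$ the set of classes, and $\mathrm{Sym}(X,\sim)$ the group of bijections $g$ of $X$ with $x\sim y\iff xg\sim yg$; each such $g$ induces a permutation $\overline g$ of $\overline X$, and for a subgroup $U\le \mathrm{Sym}(X,\sim)$, $\overline U$ is the induced group of permutations of $\overline X$. A local Moufang set consists of a set with equivalence relation $(X,\sim)$ with $|\overline X|>2$ and, for each $x\in X$, a subgroup (root group) $U_x\le\mathrm{Sym}(X,\sim)$ such that: (LM0) if $x\sim y$ then $\overline{U_x}=\overline{U_y}$; (LM1) $U_x$ fixes $x$ and acts sharply transitively on $X\setminus\overline x$; (LM1') $\overline{U_x}$ fixes $\overline x$ and acts sharply transitively on $\overline X\setminus\{\overline x\}$; (LM2) $U_x^g=U_{xg}$ for all $x\in X$ and all $g$ in the little projective group $G:=\langle U_x\mid x\in X\rangle$. A basis is a fixed pair $(0,\infty)$ with $0\not\sim\infty$. For $x\not\sim\infty$, $\alpha_x$ is the unique element of $U_\infty$ with $0\alpha_x=x$. A unit is $x\in X$ with $x\not\sim0$, $x\not\sim\infty$; for a unit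 $x$, $\mu_x$ is the unique element of $U_0\alpha_xU_0$ interchanging $0$ and $\infty$. The Hua subgroup is $H:=\langle\mu_x\mu_y\mid x,y\text{ units}\rangle$. $U_0^\circ:=\{u\in U_0\mid \overline u=\mathrm{id}_{\overline X}\}$. *)

(* Permutations of X are functions X -> X; groups act on the RIGHT:
   x g is written (g x), and the product g h (first g, then h) is the
   function composition  (fun x => h (g x)). *)
From Stdlib Require Import RelationClasses.

Set Implicit Arguments.

Definition comp {X : Type} (h g : X -> X) : X -> X := fun x => h (g x).
Definition rmul {X : Type} (g h : X -> X) : X -> X := fun x => h (g x).

Definition is_bij {X : Type} (f : X -> X) : Prop :=
  exists g : X -> X, (forall x, g (f x) = x) /\ (forall x, f (g x) = x).

Definition in_Sym {X : Type} (eqv : X -> X -> Prop) (f : X -> X) : Prop :=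
  is_bij f /\ forall x y, eqv x y <-> eqv (f x) (f y).

Definition is_subgroup_Sym {X : Type} (eqv : X -> X -> Prop)
  (P : (X -> X) -> Prop) : Prop :=
  (forall f, P f -> in_Sym eqv f) /\
  P (fun x => x) /\
  (forall f g, P f -> P g -> P (rmul f g)) /\
  (forall f g, P f -> (forall x, g (f x) = x) -> (forall x, f (g x) = x) -> P g).

Inductive gen {X : Type} (S : (X -> X) -> Prop) : (X -> X) -> Prop :=
| gen_id : gen S (fun x => x)
| gen_base f : S f -> gen S f
| gen_mul f g : gen S f -> gen S g -> gen S (rmul f g)
| gen_inv f g : gen S f -> (forall x, g (f x) = x) -> (forall x, f (g x) = x) -> gen S g.

Definition little_proj {X : Type} (U : X -> (X -> X) -> Prop) : (X -> X) -> Prop :=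
  gen (fun f => exists x, U x f).

Definition local_moufang_set {X : Type} (eqv : X -> X -> Prop)
  (U : X -> (X -> X) -> Prop) : Prop :=
  Equivalence eqv /\
  (exists a b c, ~ eqv a b /\ ~ eqv a c /\ ~ eqv b c) /\
  (forall x, is_subgroup_Sym eqv (U x)) /\
  (* LM0: x ~ y  ->  Ubar_x = Ubar_y *)
  (forall x y, eqv x y ->
     forall u, U x u -> exists v, U y v /\ forall z, eqv (u z) (v z)) /\
  (forall x u, U x u -> u x = x) /\
  (forall x y z, ~ eqv y x -> ~ eqv z x ->
     exists u, U x u /\ u y = z /\ forall u', U x u' -> u' y = z -> u' = u) /\
  (* LM1': Ubar_x fixes xbar and is sharply transitive on Xbar \ {xbar} *)
  (forall x u, U x u -> eqv (u x) x) /\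
  (forall x y z, ~ eqv y x -> ~ eqv z x -> exists u, U x u /\ eqv (u y) z) /\
  (forall x y u v, ~ eqv y x -> U x u -> U x v -> eqv (u y) (v y) ->
     forall w, eqv (u w) (v w)) /\
  (* LM2: U_x^g = U_{xg} for g in G;  v = g^-1 u g  iff  v o g = g o u *)
  (forall x g, little_proj U g ->
     forall v, U (g x) v <-> exists u, U x u /\ comp v g = comp g u).

Definition is_alpha {X : Type} (U : X -> (X -> X) -> Prop) (zero inf x : X)
  (a : X -> X) : Prop := U inf a /\ a zero = x.

Definition is_mu {X : Type} (U : X -> (X -> X) -> Prop) (zero inf x : X)
  (m : X -> X) : Prop :=
  (exists u1 a u2, U zero u1 /\ is_alpha U zero inf x a /\ U zero u2 /\
                   m = rmul (rmul u1 a) u2) /\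
  m zero = inf /\ m inf = zero.

Definition is_unit {X : Type} (eqv : X -> X -> Prop) (zero inf x : X) : Prop :=
  ~ eqv x zero /\ ~ eqv x inf.

Definition hua {X : Type} (eqv : X -> X -> Prop) (U : X -> (X -> X) -> Prop)
  (zero inf : X) : (X -> X) -> Prop :=
  gen (fun f => exists x y mx my,
         is_unit eqv zero inf x /\ is_unit eqv zero inf y /\
         is_mu U zero inf x mx /\ is_mu U zero inf y my /\ f = rmul mx my).

Definition U_circ {X : Type} (eqv : X -> X -> Prop) (U : X -> (X -> X) -> Prop)
  (zero : X) (u : X -> X) : Prop :=
  U zero u /\ forall z, eqv (u z) z.

(* Let S be U_0 H U_inf together with U_0 H tau U_0°; it contains the identity.
   Since H fixes 0 and inf it normalises U_0 and U_inf, and tau^2 lies in H; together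
   with the factorisations mu_x = u1 alpha_x u2 (u1, u2 in U_0) and the sharp
   transitivity of the root groups on points and on classes, this shows that S is
   closed under right multiplication by tau, tau^-1, U_0 and U_inf.  Every root group
   is conjugate to U_0 or U_inf, so S is stable under G and therefore contains G.
   An element of the second cell maps 0 into the class of inf, so G_0 = U_0 H; and
   an element u h of U_0 H fixing inf has u = 1, so G_{0,inf} = H. *)

From Stdlib Require Import RelationClasses Setoid FunctionalExtensionality
  Classical ClassicalEpsilon.

Local Infix "·" := rmul (at level 40, left associativity).

(* For a non-bijective [f] this is only some choice of preimages. *)
Definition ginv {X : Type} (f : X -> X) : X -> X :=
  fun y => epsilon (inhabits y) (fun x => f x = y).

Local Notation "f ^-1" := (ginv f) (at level 2, format "f ^-1").

Local Ltac fext := let z := fresh "z" in apply functional_extensionality; intro z; unfold rmul.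

Section Bijections.

Context {X : Type}.
Implicit Types (f g : X -> X) (B : (X -> X) -> Prop).

Lemma ginv_r {f} y : is_bij f -> f (f^-1 y) = y.
Proof.
  intros [g [_ Hfg]].
  apply (epsilon_spec (inhabits y) (fun x => f x = y)).
  exists (g y); apply Hfg.
Qed.

Lemma ginv_l {f} x : is_bij f -> f^-1 (f x) = x.
Proof.
  intros Hf. pose proof (ginv_r (f x) Hf) as E.
  destruct Hf as [g [Hgf _]].
  now rewrite <- (Hgf (f^-1 (f x))), E, Hgf.
Qed.

Lemma gen_bij B f : (forall b, B b -> is_bij b) -> gen B f -> is_bij f.
Proof.
  intros HB Hf.
  induction Hf as [| b Hb | f g _ [f' [Hf1 Hf2]] _ [g' [Hg1 Hg2]] | f g _ _ Hgf Hfg].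
  - now exists (fun x => x).
  - auto.
  - exists (fun x => f' (g' x)); unfold rmul; split; intro x.
    + now rewrite Hg1, Hf1.
    + now rewrite Hf2, Hg2.
  - now exists f.
Qed.

Lemma gen_Sym (eqv : X -> X -> Prop) B f :
  (forall b, B b -> in_Sym eqv b) -> gen B f -> in_Sym eqv f.
Proof.
  intros HB Hf. split; [exact (gen_bij B f (fun b Hb => proj1 (HB b Hb)) Hf) |].
  induction Hf as [| b Hb | f g _ IHf _ IHg | f g _ IHf Hgf Hfg]; intros x y.
  - reflexivity.
  - apply HB, Hb.
  - unfold rmul. rewrite (IHf x y). apply IHg.
  - rewrite (IHf (g x) (g y)), !Hfg. reflexivity.
Qed.

(* Induction on [gen B] must carry the two-sided inverses along, since [gen_inv]
   only knows its argument as an inverse. *)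
Lemma gen_preserves B (P : (X -> X) -> Prop) :
  (forall b, B b -> is_bij b) ->
  (forall b b', B b -> (forall x, b' (b x) = x) -> (forall x, b (b' x) = x) -> B b') ->
  (forall b s, B b -> P s -> P (s · b)) ->
  forall f s, gen B f -> P s -> P (s · f).
Proof.
  intros Bbij Binv Bstab f s Hf. revert s.
  enough (K : (forall s, P s -> P (s · f)) /\
              forall f', (forall x, f' (f x) = x) -> (forall x, f (f' x) = x) ->
                         forall s, P s -> P (s · f')) by exact (proj1 K).
  induction Hf as [| b Hb | f g Hf [IHf IHf'] Hg [IHg IHg'] | f g _ [IHf IHf'] Hgf Hfg].
  - split; [intros s Hs; exact Hs |].
    intros f' Hf' _ s Hs.
    replace f' with (fun x : X => x) by (fext; symmetry; apply Hf').
    exact Hs.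
  - split; [auto |]. intros b' Hb1 Hb2 s Hs. apply Bstab; eauto.
  - split; [intros s Hs; exact (IHg _ (IHf _ Hs)) |].
    intros k _ Hk2 s Hs.
    pose proof (gen_bij B f Bbij Hf) as Bf. pose proof (gen_bij B g Bbij Hg) as Bg.
    replace k with (g^-1 · f^-1).
    + apply (IHf' _ (fun x => ginv_l x Bf) (fun x => ginv_r x Bf)),
        (IHg' _ (fun x => ginv_l x Bg) (fun x => ginv_r x Bg)), Hs.
    + fext. rewrite <- (Hk2 z) at 1. unfold rmul. now rewrite !ginv_l.
  - split; [exact (IHf' g Hgf Hfg) |].
    intros k _ Hk2 s Hs.
    replace k with f; [exact (IHf _ Hs) |].
    fext. now rewrite <- (Hfg (k z)), Hk2.
Qed.

End Bijections.

Section LocalMoufangSet.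

Context {X : Type} {eqv : X -> X -> Prop} {U : X -> (X -> X) -> Prop}.
Hypothesis HM : local_moufang_set eqv U.

Local Notation G := (little_proj U).

#[local] Instance eqv_Equivalence : Equivalence eqv.
Proof. apply HM. Qed.

Lemma Sym_eqv_iff {f} a b : in_Sym eqv f -> (eqv (f a) (f b) <-> eqv a b).
Proof. intros [_ Hf]. symmetry. apply Hf. Qed.

Lemma root_subgroup x : is_subgroup_Sym eqv (U x).
Proof. destruct HM as (_ & _ & Hsub & _). apply Hsub. Qed.

Lemma root_Sym {x u} : U x u -> in_Sym eqv u.
Proof. apply (root_subgroup x). Qed.

Lemma root_bij {x u} : U x u -> is_bij u.
Proof. intros Hu. apply (root_Sym Hu). Qed.

Lemma root_id x : U x (fun y => y).
Proof. apply (root_subgroup x). Qed.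

Lemma root_mul {x u v} : U x u -> U x v -> U x (u · v).
Proof. apply (root_subgroup x). Qed.

Lemma root_inv {x u u'} :
  U x u -> (forall y, u' (u y) = y) -> (forall y, u (u' y) = y) -> U x u'.
Proof. apply (root_subgroup x). Qed.

Lemma root_ginv {x u} : U x u -> U x u^-1.
Proof.
  intros Hu. apply (root_inv Hu); intro y; [apply ginv_l | apply ginv_r]; exact (root_bij Hu).
Qed.

Lemma root_fix {x u} : U x u -> u x = x.
Proof. destruct HM as (_ & _ & _ & _ & Hfix & _). apply Hfix. Qed.

Lemma root_transitive x y z : ~ eqv y x -> ~ eqv z x -> exists u, U x u /\ u y = z.
Proof.
  intros Hy Hz. destruct HM as (_ & _ & _ & _ & _ & Htrans & _).
  destruct (Htrans x y z Hy Hz) as (u & Hu & Huy & _). eauto.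
Qed.

Lemma root_not_eqv {x u} y : U x u -> ~ eqv y x -> ~ eqv (u y) x.
Proof.
  intros Hu Hy K. apply Hy, (Sym_eqv_iff y x (root_Sym Hu)).
  now rewrite (root_fix Hu).
Qed.

Lemma root_eq {x u v} y : U x u -> U x v -> ~ eqv y x -> u y = v y -> u = v.
Proof.
  intros Hu Hv Hy Huv. destruct HM as (_ & _ & _ & _ & _ & Hsharp & _).
  destruct (Hsharp x y (u y) Hy (root_not_eqv y Hu Hy)) as (w & _ & _ & Huniq).
  rewrite (Huniq u Hu eq_refl). symmetry. apply Huniq; [exact Hv | now symmetry].
Qed.

Lemma root_trivial {x u} y : U x u -> ~ eqv y x -> eqv (u y) y -> forall z, eqv (u z) z.
Proof.
  intros Hu Hy K. destruct HM as (_ & _ & _ & _ & _ & _ & _ & _ & Hsharp & _).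
  exact (Hsharp x y u _ Hy Hu (root_id x) K).
Qed.

Lemma G_root {x u} : U x u -> G u.
Proof. intros Hu. apply gen_base. now exists x. Qed.

Lemma G_mul {f g} : G f -> G g -> G (f · g).
Proof. apply gen_mul. Qed.

Lemma G_Sym {g} : G g -> in_Sym eqv g.
Proof. apply gen_Sym. intros b [x Hb]. exact (root_Sym Hb). Qed.

Lemma G_bij {g} : G g -> is_bij g.
Proof. intros Hg. apply (G_Sym Hg). Qed.

Lemma G_ginv {g} : G g -> G g^-1.
Proof.
  intros Hg. apply (gen_inv _ Hg); intro x; [apply ginv_l | apply ginv_r]; exact (G_bij Hg).
Qed.

Lemma root_conj {x g u} : G g -> U x u -> U (g x) (g^-1 · u · g).
Proof.
  intros Hg Hu. destruct HM as (_ & _ & _ & _ & _ & _ & _ & _ & _ & Hconj).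
  apply (Hconj x g Hg). exists u. split; [exact Hu |].
  fext. unfold comp. now rewrite ginv_l by exact (G_bij Hg).
Qed.

Lemma root_conj_inv {x g v} : G g -> U (g x) v -> U x (g · v · g^-1).
Proof.
  intros Hg Hv. destruct HM as (_ & _ & _ & _ & _ & _ & _ & _ & _ & Hconj).
  apply (Hconj x g Hg) in Hv as (u & Hu & E).
  replace (g · v · g^-1) with u; [exact Hu |].
  fext. change (v (g z)) with (comp v g z). rewrite E. unfold comp.
  now rewrite ginv_l by exact (G_bij Hg).
Qed.

Lemma root_conj_fix {x g u} : G g -> g x = x -> U x u -> U x (g^-1 · u · g).
Proof. intros Hg Hx Hu. rewrite <- Hx at 1. exact (root_conj Hg Hu). Qed.

Lemma root_conj_inv_fix {x g u} : G g -> g x = x -> U x u -> U x (g · u · g^-1).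
Proof. intros Hg Hx Hu. rewrite <- Hx in Hu. exact (root_conj_inv Hg Hu). Qed.

Lemma class_trivial_conj {g w} : G g -> (forall z, eqv (w z) z) ->
  forall z, eqv ((g^-1 · w · g) z) z.
Proof.
  intros Hg Hw z. unfold rmul. rewrite <- (ginv_r z (G_bij Hg)) at 2.
  apply (Sym_eqv_iff _ _ (G_Sym Hg)), Hw.
Qed.

Section Basis.

Context {zero inf : X}.
Hypothesis Hbasis : ~ eqv zero inf.

Local Notation Hua := (hua eqv U zero inf).
Local Notation Unit := (is_unit eqv zero inf).

Lemma basis_sym : ~ eqv inf zero.
Proof. intro K. apply Hbasis. now symmetry. Qed.

Lemma unit_fixing {g} z : in_Sym eqv g -> g zero = zero -> g inf = inf -> Unit z -> Unit (g z).
Proof.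
  intros Hg H0 Hi [Hz0 Hzi]; split; intro K.
  - apply Hz0, (Sym_eqv_iff z zero Hg). now rewrite H0.
  - apply Hzi, (Sym_eqv_iff z inf Hg). now rewrite Hi.
Qed.

Lemma unit_swapping {g} z : in_Sym eqv g -> g zero = inf -> g inf = zero -> Unit z -> Unit (g z).
Proof.
  intros Hg H0 Hi [Hz0 Hzi]; split; intro K.
  - apply Hzi, (Sym_eqv_iff z inf Hg). now rewrite Hi.
  - apply Hz0, (Sym_eqv_iff z zero Hg). now rewrite H0.
Qed.

Lemma unit_eqv y z : Unit y -> eqv z y -> Unit z.
Proof. intros [Hy0 Hyi] K; split; intro K'; [apply Hy0 | apply Hyi]; now rewrite <- K. Qed.

Lemma root0_unit {u} : U zero u -> ~ eqv (u inf) inf -> Unit (u inf).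
Proof.
  intros Hu K. split; [exact (root_not_eqv inf Hu basis_sym) | exact K].
Qed.

Lemma rootinf_unit {v} : U inf v -> ~ eqv (v zero) zero -> Unit (v zero).
Proof. intros Hv K. split; [exact K | exact (root_not_eqv zero Hv Hbasis)]. Qed.

Lemma root0_ginv_unit {u} : U zero u -> Unit (u inf) -> Unit (u^-1 inf).
Proof.
  intros Hu [_ Hui]. apply (root0_unit (root_ginv Hu)). intro K.
  apply Hui. symmetry. rewrite <- (ginv_r inf (root_bij Hu)) at 1.
  now apply (Sym_eqv_iff _ _ (root_Sym Hu)).
Qed.

Lemma mu_G {x m} : is_mu U zero inf x m -> G m.
Proof.
  intros [(u1 & a & u2 & Hu1 & [Ha _] & Hu2 & ->) _].
  exact (G_mul (G_mul (G_root Hu1) (G_root Ha)) (G_root Hu2)).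
Qed.

Lemma hua_G {h} : Hua h -> G h.
Proof.
  intros Hh. induction Hh as [| f (x & y & mx & my & _ & _ & Hmx & Hmy & ->) | | ].
  - apply gen_id.
  - exact (G_mul (mu_G Hmx) (mu_G Hmy)).
  - now apply G_mul.
  - eapply gen_inv; eassumption.
Qed.

Lemma hua_fix {h} : Hua h -> h zero = zero /\ h inf = inf.
Proof.
  intros Hh.
  induction Hh as [| f (x & y & mx & my & _ & _ & [_ [Hx0 Hxi]] & [_ [Hy0 Hyi]] & ->)
                  | f g _ [Hf0 Hfi] _ [Hg0 Hgi] | f g _ [Hf0 Hfi] Hgf _].
  - easy.
  - unfold rmul. now rewrite Hx0, Hxi, Hy0, Hyi.
  - unfold rmul. now rewrite Hf0, Hfi, Hg0, Hgi.
  - rewrite <- Hf0 at 1. rewrite <- Hfi at 1. now rewrite !Hgf.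
Qed.

Lemma hua_mu {x y mx my} : Unit x -> Unit y ->
  is_mu U zero inf x mx -> is_mu U zero inf y my -> Hua (mx · my).
Proof. intros. apply gen_base. exists x, y, mx, my. auto. Qed.

Lemma hua_mul {f g} : Hua f -> Hua g -> Hua (f · g).
Proof. apply gen_mul. Qed.

Lemma hua_ginv {h} : Hua h -> Hua h^-1.
Proof.
  intros Hh. pose proof (G_bij (hua_G Hh)) as Bh.
  apply (gen_inv _ Hh); intro x; [apply ginv_l | apply ginv_r]; exact Bh.
Qed.

Lemma mu_decomp {a} : U inf a -> Unit (a zero) ->
  exists u1 u2, U zero u1 /\ U zero u2 /\ Unit (u1 inf) /\
                is_mu U zero inf (a zero) (u1 · a · u2).
Proof.
  intros Ha [Ha0 Hai].
  assert (Hb : Unit (a^-1 zero)).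
  { split.
    - intro K. apply Ha0. symmetry. rewrite <- (ginv_r zero (root_bij Ha)) at 1.
      now apply (Sym_eqv_iff _ _ (root_Sym Ha)).
    - exact (root_not_eqv zero (root_ginv Ha) Hbasis). }
  destruct (root_transitive zero inf (a^-1 zero) basis_sym (proj1 Hb)) as (u1 & Hu1 & Eu1).
  destruct (root_transitive zero (a zero) inf Ha0 basis_sym) as (u2 & Hu2 & Eu2).
  exists u1, u2. rewrite Eu1. do 3 (split; [assumption |]). split; [| split].
  - exists u1, a, u2. now repeat split.
  - unfold rmul. now rewrite (root_fix Hu1).
  - unfold rmul. rewrite Eu1, ginv_r by exact (root_bij Ha). exact (root_fix Hu2).
Qed.

Section Tau.

Context {e : X} {tau : X -> X}.
Hypothesis He : Unit e.
Hypothesis Htau : is_mu U zero inf e tau.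

Lemma tau_G : G tau.
Proof. exact (mu_G Htau). Qed.

Lemma tau_zero : tau zero = inf.
Proof. apply Htau. Qed.

Lemma tau_inf : tau inf = zero.
Proof. apply Htau. Qed.

Lemma tauV_zero : tau^-1 zero = inf.
Proof. rewrite <- tau_inf. exact (ginv_l inf (G_bij tau_G)). Qed.

Lemma tauV_inf : tau^-1 inf = zero.
Proof. rewrite <- tau_zero. exact (ginv_l zero (G_bij tau_G)). Qed.

Lemma hua_mu_tau {x m} : Unit x -> is_mu U zero inf x m -> Hua (m · tau).
Proof. intros Hx Hm. exact (hua_mu Hx He Hm Htau). Qed.

Lemma hua_tau_mu {x m} : Unit x -> is_mu U zero inf x m -> Hua (tau · m).
Proof. intros Hx Hm. exact (hua_mu He Hx Htau Hm). Qed.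

Lemma hua_tauV2 : Hua (tau^-1 · tau^-1).
Proof.
  pose proof (G_bij tau_G) as Bt.
  apply (gen_inv _ (hua_mu_tau He Htau)); intro x; unfold rmul;
    now rewrite ?ginv_l, ?ginv_r by exact Bt.
Qed.

Lemma U0_conj_tau {u} : U zero u -> U inf (tau^-1 · u · tau).
Proof. rewrite <- tau_zero. exact (root_conj tau_G). Qed.

Lemma Uinf_conj_tau {v} : U inf v -> U zero (tau^-1 · v · tau).
Proof. rewrite <- tau_inf. exact (root_conj tau_G). Qed.

Lemma U0_conj_tauV {u} : U zero u -> U inf (tau · u · tau^-1).
Proof. rewrite <- tau_inf. exact (root_conj_inv tau_G). Qed.

Lemma Uinf_conj_tauV {v} : U inf v -> U zero (tau · v · tau^-1).
Proof. rewrite <- tau_zero. exact (root_conj_inv tau_G). Qed.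

Definition cell_U0HUinf (g : X -> X) : Prop :=
  exists u h v, U zero u /\ Hua h /\ U inf v /\ g = u · h · v.

Definition cell_U0HtauU0c (g : X -> X) : Prop :=
  exists u h w, U zero u /\ Hua h /\ U_circ eqv U zero w /\ g = u · h · tau · w.

Definition bruhat (g : X -> X) : Prop := cell_U0HUinf g \/ cell_U0HtauU0c g.

Local Ltac cancel_ginv :=
  repeat first
    [ rewrite ginv_l by eauto using G_bij, root_bij, G_mul, G_root, G_ginv, hua_G, tau_G
    | rewrite ginv_r by eauto using G_bij, root_bij, G_mul, G_root, G_ginv, hua_G, tau_G ].

Lemma cell_U0HUinf_mul_hua {k h} : cell_U0HUinf k -> Hua h -> cell_U0HUinf (k · h).
Proof.
  intros (u & h' & v & Hu & Hh' & Hv & ->) Hh.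
  exists u, (h' · h), (h^-1 · v · h). repeat split; auto using hua_mul.
  - exact (root_conj_fix (hua_G Hh) (proj2 (hua_fix Hh)) Hv).
  - fext. now cancel_ginv.
Qed.

Lemma cell_U0HUinf_mul_Uinf {k b} : cell_U0HUinf k -> U inf b -> cell_U0HUinf (k · b).
Proof.
  intros (u & h & v & Hu & Hh & Hv & ->) Hb.
  exists u, h, (v · b). repeat split; auto using root_mul.
Qed.

(* [Hua] normalises [U zero], so [U zero] and [Hua] can be pushed to the left. *)
Lemma bruhat_U0H_mul {u h k} : U zero u -> Hua h -> bruhat k -> bruhat (u · h · k).
Proof.
  intros Hu Hh Hk.
  assert (Hconj : forall u', U zero u' -> U zero (h · u' · h^-1))
    by (intro; exact (root_conj_inv_fix (hua_G Hh) (proj1 (hua_fix Hh)))).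
  destruct Hk as [(u' & h' & v & Hu' & Hh' & Hv & ->) | (u' & h' & w & Hu' & Hh' & Hw & ->)].
  - left. exists (u · (h · u' · h^-1)), (h · h'), v.
    repeat split; auto using root_mul, hua_mul.
    fext. now cancel_ginv.
  - right. exists (u · (h · u' · h^-1)), (h · h'), w.
    split; [| split; [| split; [exact Hw |]]]; auto using root_mul, hua_mul.
    fext. now cancel_ginv.
Qed.

(* Writing [mu_(a 0) = u1 a u2] shows [a tau = u1^-1 (mu tau) (tau^-1 u2^-1 tau)]. *)
Lemma cell_alpha_tau {a} : U inf a -> Unit (a zero) -> cell_U0HUinf (a · tau).
Proof.
  intros Ha Ha0. destruct (mu_decomp Ha Ha0) as (u1 & u2 & Hu1 & Hu2 & _ & Hm).
  exists u1^-1, (u1 · a · u2 · tau), (tau^-1 · u2^-1 · tau).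
  repeat split; auto using root_ginv, U0_conj_tau.
  - exact (hua_mu_tau Ha0 Hm).
  - fext. now cancel_ginv.
Qed.

Lemma bruhat_tau_U0 {u} : U zero u -> bruhat (tau · u).
Proof.
  intros Hu. destruct (classic (eqv (u inf) inf)) as [K | K].
  - right. exists (fun x => x), (fun x => x), u.
    split; [apply root_id | split; [apply gen_id | split; [split |]]]; [exact Hu | | reflexivity].
    exact (root_trivial inf Hu basis_sym K).
  - left. replace (tau · u) with (tau · u · tau^-1 · tau) by (fext; now cancel_ginv).
    apply (cell_alpha_tau (U0_conj_tauV Hu)). unfold rmul. rewrite tau_zero.
    apply (unit_swapping _ (G_Sym (G_ginv tau_G)) tauV_zero tauV_inf).
    exact (root0_unit Hu K).
Qed.

Lemma bruhat_alpha_U0 {a u} : U inf a -> Unit (a zero) -> U zero u -> bruhat (a · u).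
Proof.
  intros Ha Ha0 Hu. destruct (mu_decomp Ha Ha0) as (u1 & u2 & Hu1 & Hu2 & _ & Hm).
  replace (a · u) with
    (u1^-1 · (u1 · a · u2 · tau · (tau^-1 · tau^-1)) · (tau · (u2^-1 · u)))
    by (fext; now cancel_ginv).
  apply (bruhat_U0H_mul (root_ginv Hu1) (hua_mul (hua_mu_tau Ha0 Hm) hua_tauV2)).
  exact (bruhat_tau_U0 (root_mul (root_ginv Hu2) Hu)).
Qed.

(* With [a := tau^-1 b tau] and [mu_(a 0) = u1 a u2] one gets
   [b = b1 (tau mu) tau^-1 b2] with [b1, b2] in [U inf]; conjugating [v b1] past
   [tau mu] in [Hua] leaves an element [c] of [U inf] moving [0] to a unit. *)
Lemma bruhat_circ {v b} : U inf v -> (forall z, eqv (v z) z) -> U zero b -> Unit (b inf) ->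
  bruhat (v · b).
Proof.
  intros Hv Hvc Hb Hbu.
  pose proof (U0_conj_tau Hb) as Ha.
  assert (Ha0 : Unit ((tau^-1 · b · tau) zero)).
  { unfold rmul. rewrite tauV_zero. exact (unit_swapping _ (G_Sym tau_G) tau_zero tau_inf Hbu). }
  destruct (mu_decomp Ha Ha0) as (u1 & u2 & Hu1 & Hu2 & Hu1i & Hm).
  pose proof (hua_tau_mu Ha0 Hm) as Hh.
  set (h := tau · (u1 · (tau^-1 · b · tau) · u2)) in Hh.
  pose proof (U0_conj_tauV (root_ginv Hu1)) as Hb1.
  pose proof (U0_conj_tauV (root_ginv Hu2)) as Hb2.
  pose proof (root_conj_fix (hua_G Hh) (proj2 (hua_fix Hh)) (root_mul Hv Hb1)) as Hc.
  assert (Hc0 : Unit ((h^-1 · (v · (tau · u1^-1 · tau^-1)) · h) zero)).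
  { unfold rmul at 1 2. rewrite (proj1 (hua_fix (hua_ginv Hh))).
    apply (unit_fixing _ (G_Sym (hua_G Hh)) (proj1 (hua_fix Hh)) (proj2 (hua_fix Hh))).
    apply (unit_eqv ((tau · u1^-1 · tau^-1) zero)).
    - unfold rmul. rewrite tau_zero.
      apply (unit_swapping _ (G_Sym (G_ginv tau_G)) tauV_zero tauV_inf).
      exact (root0_ginv_unit Hu1 Hu1i).
    - exact (proj2 (Sym_eqv_iff _ _ (root_Sym Hb1)) (Hvc zero)). }
  replace (v · b) with
    ((fun x => x) · h · ((h^-1 · (v · (tau · u1^-1 · tau^-1)) · h) · tau · (tau^-1 · tau^-1)
                         · (tau · u2^-1 · tau^-1)))
    by (fext; cancel_ginv; unfold h, rmul; now cancel_ginv).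
  apply (bruhat_U0H_mul (root_id zero) Hh). left.
  exact (cell_U0HUinf_mul_Uinf (cell_U0HUinf_mul_hua (cell_alpha_tau Hc Hc0) hua_tauV2) Hb2).
Qed.

Lemma bruhat_mul_U0_unit {s b} : U zero b -> Unit (b inf) -> bruhat s -> bruhat (s · b).
Proof.
  intros Hb Hbu [(u & h & v & Hu & Hh & Hv & ->) | (u & h & w & Hu & Hh & [Hw _] & ->)].
  - refine (bruhat_U0H_mul (k := v · b) Hu Hh _).
    destruct (classic (eqv (v zero) zero)) as [K | K].
    + exact (bruhat_circ Hv (root_trivial zero Hv Hbasis K) Hb Hbu).
    + exact (bruhat_alpha_U0 Hv (rootinf_unit Hv K) Hb).
  - exact (bruhat_U0H_mul (k := tau · (w · b)) Hu Hh (bruhat_tau_U0 (root_mul Hw Hb))).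
Qed.

(* An element of [U zero] fixing the class of [inf] is split as [b (b^-1 f)] with
   both factors moving [inf] to a unit. *)
Lemma bruhat_mul_U0 {s f} : U zero f -> bruhat s -> bruhat (s · f).
Proof.
  intros Hf Hs. destruct (classic (eqv (f inf) inf)) as [K | K].
  - destruct (root_transitive zero inf e basis_sym (proj1 He)) as (b & Hb & Eb).
    replace (s · f) with (s · b · (b^-1 · f)) by (fext; now cancel_ginv).
    apply (bruhat_mul_U0_unit (root_mul (root_ginv Hb) Hf)).
    + unfold rmul. apply (unit_eqv (b^-1 inf)).
      * apply (root0_ginv_unit Hb). now rewrite Eb.
      * exact (root_trivial inf Hf basis_sym K _).
    + apply (bruhat_mul_U0_unit Hb); [now rewrite Eb | exact Hs].
  - exact (bruhat_mul_U0_unit Hf (root0_unit Hf K) Hs).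
Qed.

Lemma bruhat_mul_tau {s} : bruhat s -> bruhat (s · tau).
Proof.
  intros [(u & h & v & Hu & Hh & Hv & ->) | (u & h & w & Hu & Hh & [Hw _] & ->)].
  - destruct (classic (eqv (v zero) zero)) as [K | K].
    + right. exists u, h, (tau^-1 · v · tau).
      split; [exact Hu | split; [exact Hh | split; [split |]]].
      * exact (Uinf_conj_tau Hv).
      * exact (class_trivial_conj tau_G (root_trivial zero Hv Hbasis K)).
      * fext. now cancel_ginv.
    + refine (bruhat_U0H_mul (k := v · tau) Hu Hh _). left.
      exact (cell_alpha_tau Hv (rootinf_unit Hv K)).
  - left. exists u, (h · (tau · tau)), (tau^-1 · w · tau).
    split; [exact Hu | split; [exact (hua_mul Hh (hua_mu_tau He Htau)) | split]].
    + exact (U0_conj_tau Hw).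
    + fext. now cancel_ginv.
Qed.

Lemma bruhat_mul_hua_comm {s h} : Hua h -> tau · h = h · tau -> bruhat s -> bruhat (s · h).
Proof.
  intros Hh Hcomm [Hs | (u & h' & w & Hu & Hh' & [Hw Hwc] & ->)].
  - left. exact (cell_U0HUinf_mul_hua Hs Hh).
  - right. exists u, (h' · h), (h^-1 · w · h).
    split; [exact Hu | split; [exact (hua_mul Hh' Hh) | split; [split |]]].
    + exact (root_conj_fix (hua_G Hh) (proj1 (hua_fix Hh)) Hw).
    + exact (class_trivial_conj (hua_G Hh) Hwc).
    + assert (E : forall y, tau (h y) = h (tau y)) by (intro y; exact (eq_sym (equal_f Hcomm y))).
      fext. rewrite E. now cancel_ginv.
Qed.

Lemma bruhat_mul_tauV {s} : bruhat s -> bruhat (s · tau^-1).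
Proof.
  intros Hs. replace (s · tau^-1) with (s · tau · (tau^-1 · tau^-1)) by (fext; now cancel_ginv).
  apply (bruhat_mul_hua_comm hua_tauV2); [fext; now cancel_ginv | exact (bruhat_mul_tau Hs)].
Qed.

Lemma bruhat_mul_Uinf {s f} : U inf f -> bruhat s -> bruhat (s · f).
Proof.
  intros Hf Hs.
  replace (s · f) with (s · tau^-1 · (tau · f · tau^-1) · tau) by (fext; now cancel_ginv).
  exact (bruhat_mul_tau (bruhat_mul_U0 (Uinf_conj_tauV Hf) (bruhat_mul_tauV Hs))).
Qed.

(* [U x] is conjugate to [U inf] by [U zero] if [x ~ inf], and to [U zero] by [U inf]
   otherwise. *)
Lemma bruhat_mul_root {x s f} : U x f -> bruhat s -> bruhat (s · f).
Proof.
  intros Hf Hs. destruct (classic (eqv x inf)) as [K | K].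
  - assert (Kx : ~ eqv x zero) by (intro K'; apply Hbasis; now rewrite <- K').
    destruct (root_transitive zero inf x basis_sym Kx) as (u & Hu & <-).
    replace (s · f) with (s · u^-1 · (u · f · u^-1) · u) by (fext; now cancel_ginv).
    apply (bruhat_mul_U0 Hu), (bruhat_mul_Uinf (root_conj_inv (G_root Hu) Hf)).
    exact (bruhat_mul_U0 (root_ginv Hu) Hs).
  - destruct (root_transitive inf zero x Hbasis K) as (a & Ha & <-).
    replace (s · f) with (s · a^-1 · (a · f · a^-1) · a) by (fext; now cancel_ginv).
    apply (bruhat_mul_Uinf Ha), (bruhat_mul_U0 (root_conj_inv (G_root Ha) Hf)).
    exact (bruhat_mul_Uinf (root_ginv Ha) Hs).
Qed.

Lemma bruhat_id : bruhat (fun x => x).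
Proof.
  left. exists (fun x => x), (fun x => x), (fun x => x).
  split; [apply root_id | split; [apply gen_id | split; [apply root_id | reflexivity]]].
Qed.

Lemma little_proj_bruhat g : G g <-> bruhat g.
Proof.
  split.
  - intros Hg. refine (gen_preserves _ bruhat _ _ _ g _ Hg bruhat_id).
    + intros b [x Hb]. exact (root_bij Hb).
    + intros b b' [x Hb] H1 H2. exists x. exact (root_inv Hb H1 H2).
    + intros b s [x Hb]. exact (bruhat_mul_root Hb).
  - intros [(u & h & v & Hu & Hh & Hv & ->) | (u & h & w & Hu & Hh & [Hw _] & ->)].
    + exact (G_mul (G_mul (G_root Hu) (hua_G Hh)) (G_root Hv)).
    + exact (G_mul (G_mul (G_mul (G_root Hu) (hua_G Hh)) tau_G) (G_root Hw)).
Qed.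

Lemma stabilizer_zero g : (G g /\ g zero = zero) <-> exists u h, U zero u /\ Hua h /\ g = u · h.
Proof.
  split.
  - intros [Hg Hg0].
    destruct (proj1 (little_proj_bruhat g) Hg)
      as [(u & h & v & Hu & Hh & Hv & ->) | (u & h & w & Hu & Hh & [_ Hwc] & ->)].
    + exists u, h. split; [exact Hu | split; [exact Hh |]].
      enough (Ev : v = fun x => x) by (subst; reflexivity).
      apply (root_eq zero Hv (root_id inf) Hbasis). cbn.
      rewrite <- Hg0 at 2. unfold rmul. now rewrite (root_fix Hu), (proj1 (hua_fix Hh)).
    + exfalso. apply Hbasis. rewrite <- Hg0 at 1. unfold rmul.
      rewrite (root_fix Hu), (proj1 (hua_fix Hh)), tau_zero. apply Hwc.
  - intros (u & h & Hu & Hh & ->). split; [exact (G_mul (G_root Hu) (hua_G Hh)) |].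
    unfold rmul. now rewrite (root_fix Hu), (proj1 (hua_fix Hh)).
Qed.

Lemma stabilizer_zero_inf g : (G g /\ g zero = zero /\ g inf = inf) <-> Hua g.
Proof.
  split.
  - intros (Hg & Hg0 & Hgi).
    destruct (proj1 (stabilizer_zero g) (conj Hg Hg0)) as (u & h & Hu & Hh & ->).
    enough (Eu : u = fun x => x) by (subst; exact Hh).
    apply (root_eq inf Hu (root_id zero) basis_sym). cbn. unfold rmul in Hgi.
    rewrite <- (ginv_l (u inf) (G_bij (hua_G Hh))), Hgi.
    exact (proj2 (hua_fix (hua_ginv Hh))).
  - intros Hh. split; [exact (hua_G Hh) | exact (hua_fix Hh)].
Qed.

End Tau.
End Basis.
End LocalMoufangSet.


Theorem mainTheorem6 (X : Type) (eqv : X -> X -> Prop) (U : X -> (X -> X) -> Prop)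
  (zero inf : X) (HM : local_moufang_set eqv U) (Hbasis : ~ eqv zero inf)
  (e : X) (He : is_unit eqv zero inf e) (tau : X -> X) (Htau : is_mu U zero inf e tau) :
  (forall g, little_proj U g <->
     ((exists u h v, U zero u /\ hua eqv U zero inf h /\ U inf v /\
                     g = rmul (rmul u h) v) \/
      (exists u h w, U zero u /\ hua eqv U zero inf h /\ U_circ eqv U zero w /\
                     g = rmul (rmul (rmul u h) tau) w))) /\
  (forall g, (little_proj U g /\ g zero = zero) <->
     exists u h, U zero u /\ hua eqv U zero inf h /\ g = rmul u h) /\
  (forall g, (little_proj U g /\ g zero = zero /\ g inf = inf) <->
     hua eqv U zero inf g).
Proof.
  split; [| split]; intro g.
  - exact (little_proj_bruhat HM Hbasis He Htau g).
  - exact (stabilizer_zero HM Hbasis He Htau g).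
  - exact (stabilizer_zero_inf HM Hbasis He Htau g).
Qed.
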